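(* Let $p,q\in\mathbb N$, let $d=\gcd(p,q)$, and write $p=p'\cdot d$, $q=q'\cdot d$. Suppose $p\ge q'>1$ and $q\ge p'>1$. Then the number $m=p'\cdot q'\cdot d=p\cdot q'=q\cdot p'$ is antipalindromic both in base $p+1$ and in base $q+1$.
   Context: For an integer $b\ge 2$, every natural number $x$ has a unique base-$b$ expansion $x=a_\ell b^\ell+\dots+a_1b+a_0$ with $a_0,\dots,a_\ell\in\{0,1,\dots,b-1\}$ and $a_\ell\neq 0$. The number $x$ is antipalindromic in base $b$ if $a_j=b-1-a_{\ell-j}$ for all $j\in\{0,1,\dots,\ell\}$. *)

From mathcomp Require Import all_boot.
Set Implicit Arguments. Unset Strict Implicit. Unset Printing Implicit Defensive.

(* Base-b digits of x, least significant first: [:: a_0; a_1; ...; a_l],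
   with a_l <> 0 (empty list for x = 0). Fuel x suffices since b >= 2. *)
Fixpoint digits_aux (fuel b x : nat) : seq nat :=
  match fuel with
  | 0 => [::]
  | fuel'.+1 => if x == 0 then [::] else (x %% b) :: digits_aux fuel' b (x %/ b)
  end.

Definition digits (b x : nat) : seq nat := digits_aux x b x.

Definition antipalindromic (b x : nat) : Prop :=
  let s := digits b x in
  forall j, j < size s -> nth 0 s j = b - 1 - nth 0 s ((size s).-1 - j).

(* With [m = p * q' = q * p'], write [k * c = (k - 1) * (c + 1) + (c + 1 - k)]
   for [(c, k) = (p, q')] and [(c, k) = (q, p')]: when [1 < k <= c] this is a
   two-digit expansion in base [c + 1] whose digits add up to [c], which is
   exactly antipalindromicity. *)
From mathcomp Require Import all_boot zify.

Lemma digits_two b a0 a1 :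
  a0 < b -> 0 < a1 < b -> digits b (a1 * b + a0) = [:: a0; a1].
Proof.
move=> a0b /andP[a1_gt0 a1b].
have b_gt0 : 0 < b by lia.
have -> : digits b (a1 * b + a0) = digits_aux (a1 * b + a0).-2.+2 b (a1 * b + a0).
  by congr digits_aux; nia.
rewrite /= modnMDl divnMDl // modn_small // divn_small // addn0.
rewrite modn_small // divn_small //.
have /negbTE -> : a1 * b + a0 != 0 by nia.
have /negbTE -> : a1 != 0 by lia.
by case: (_ .-2).
Qed.

Lemma antipalindromic_two_digits b a0 a1 :
  a0 < b -> 0 < a1 < b -> a0 + a1 = b.-1 -> antipalindromic b (a1 * b + a0).
Proof.
move=> a0b a1b sum_a; rewrite /antipalindromic digits_two //.
by case=> [|[|j]] //= _; lia.
Qed.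

Lemma antipalindromic_mul_pred c k :
  1 < k <= c -> antipalindromic c.+1 (k * c).
Proof.
move=> /andP[k_gt1 k_le_c].
have -> : k * c = (k - 1) * c.+1 + (c.+1 - k) by nia.
by apply: antipalindromic_two_digits => //; lia.
Qed.

Theorem mainTheorem16 (p q : nat) :
  let d := gcdn p q in
  let p' := p %/ d in
  let q' := q %/ d in
  q' <= p -> 1 < q' -> p' <= q -> 1 < p' ->
  p' * q' * d = p * q' /\ p * q' = q * p' /\
  antipalindromic p.+1 (p' * q' * d) /\ antipalindromic q.+1 (p' * q' * d).
Proof.
move=> d p' q' q'_le_p q'_gt1 p'_le_q p'_gt1.
have p_eq : p' * d = p by rewrite divnK ?dvdn_gcdl.
have q_eq : q' * d = q by rewrite divnK ?dvdn_gcdr.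
have m_eq_pq' : p' * q' * d = p * q' by rewrite -p_eq mulnAC.
have pq'_eq_qp' : p * q' = q * p' by rewrite -p_eq -q_eq; nia.
rewrite m_eq_pq'; split=> //; split=> //.
split; first by rewrite mulnC; apply: antipalindromic_mul_pred; lia.
by rewrite pq'_eq_qp' mulnC; apply: antipalindromic_mul_pred; lia.
Qed.
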